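(* Let $S$ be the set of all sequents and $M,\mathbb{B}_S,m$ as in the context. For each formula $A$ put $V(A):=(m(A\Rightarrow),\,M(\Rightarrow A))$. Then for every formula $A$, $m(A\Rightarrow)$ and $M(\Rightarrow A)$ belong to $\mathbb{B}_S$ and $m(A\Rightarrow)\subseteq M(\Rightarrow A)$, and $V$ is a semi ${\tt D}\mathbb{B}_S$-valuation.
   Context: ${\sf G}^{1}{\sf LC}^{cf}$ is the cut-free second-order sequent calculus (language without relation or function symbols; sequents $\Gamma\Rightarrow\Delta$ are pairs of finite sets of formulas; initial sequents $A,\Gamma\Rightarrow\Delta,A$ for atomic $A$; rules $(L\lnot)$ $\lnot F,\Gamma\Rightarrow\Delta,F$ / $\lnot F,\Gamma\Rightarrow\Delta$; $(R\lnot)$ $F,\Gamma\Rightarrow\Delta,\lnot F$ / $\Gamma\Rightarrow\Delta,\lnot F$; rules for $\lor,\land$ and first/second-order quantifiers in which the major formula is kept in the premise, with eigenvariables not in the conclusion for $(L\exists),(R\forall)$ and arbitrary terms $t$ / abstracts $T=\lambda\vec x.G$ as instances for $(R\exists),(L\forall)$). $Tm_0$, $Tm_1^{(n)}$: first-order terms and $n$-ary abstracts. For sequents, $M(\Gamma\Rightarrow\Delta):=\{(\Lambda\Rightarrow\Theta)\in S:{\sf G}^{1}{\sf LC}^{cf}\vdash\Gamma,\Lambda\Rightarrow\Delta,\Theta\}$; this $M:S\to\mathcal{P}(S)$ satisfies $x\in M(x)\iff M(x)=S$ and $x\in M(y)\iff y\in M(x)$. $\mathbb{B}_S:=\{\alpha\subseteq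 S:\alpha=\bigcap\{M(x):\alpha\subseteq M(x)\}\}$ (with $\bigcap\emptyset=S$), a complete Boolean algebra under inclusion with meets $\bigcap$, joins $\sup_\lambda\alpha_\lambda=\bigcap\{\gamma\in\mathbb{B}_S:\bigcup_\lambda\alpha_\lambda\subseteq\gamma\}$, and complement $-\alpha=\bigcap\{M(x):x\in\alpha\}$; $m(y):=\bigcap\{M(x):y\in M(x)\}$. For a cBa $\mathbb{B}$: ${\tt D}\mathbb{B}=\{(a,b):a\le b\}$, ${\tt a}=(\Box{\tt a},\Diamond{\tt a})$; ${\tt a}\unlhd{\tt b}$ iff $\Box{\tt a}\le\Box{\tt b}$ and $\Diamond{\tt a}\ge\Diamond{\tt b}$; $-{\tt a}=(-\Diamond{\tt a},-\Box{\tt a})$; $\sup_<,\inf_<$ componentwise. A semi ${\tt D}\mathbb{B}$-valuation is a map $V$ from formulas to ${\tt D}\mathbb{B}$ with $V(\lnot F)\unlhd-V(F)$, $V(F_0\lor F_1)\unlhd\sup_<\{V(F_0),V(F_1)\}$, $V(F_0\land F_1)\unlhd\inf_<\{V(F_0),V(F_1)\}$, $V(\exists xF(x))\unlhd\sup_<\{V(F(t)):t\in Tm_0\}$, $V(\forall xF(x))\unlhd\inf_<\{V(F(t)):t\in Tm_0\}$, $V(\exists X^nF(X))\unlhd\sup_<\{V(F(T)):T\in Tm_1^{(n)}\}$, $V(\forall X^nF(X))\unlhd\inf_<\{V(F(T)):T\in Tm_1^{(n)}\}$. *)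

From Stdlib Require Import List Arith Bool.
Import ListNotations.

(* first-order terms: free variables (names) and bound variables (de Bruijn) *)
Inductive term : Type :=
| TF (a : nat)
| TB (i : nat).

(* second-order variables: free X^n (name a, arity n) or bound (de Bruijn) *)
Inductive pvar : Type :=
| PF (a : nat) (n : nat)
| PB (i : nat).

Inductive form : Type :=
| Atom (P : pvar) (ts : list term)
| Neg (F : form)
| Or (F G : form)
| And (F G : form)
| Ex1 (F : form)
| All1 (F : form)
| Ex2 (n : nat) (F : form)           (* exists X^n F *)
| All2 (n : nat) (F : form).

(* well-formedness: k = number of enclosing first-order binders,
   ar = arities of enclosing second-order binders (innermost first) *)
Definition twf (k : nat) (t : term) : bool :=
  match t with TF _ => true | TB i => Nat.ltb i k end.

Fixpoint wf (k : nat) (ar : list nat) (F : form) : bool :=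
  match F with
  | Atom (PF _ n) ts => Nat.eqb (length ts) n && forallb (twf k) ts
  | Atom (PB i) ts => Nat.ltb i (length ar) && Nat.eqb (length ts) (nth i ar 0)
                      && forallb (twf k) ts
  | Neg G => wf k ar G
  | Or G H => wf k ar G && wf k ar H
  | And G H => wf k ar G && wf k ar H
  | Ex1 G => wf (S k) ar G
  | All1 G => wf (S k) ar G
  | Ex2 n G => wf k (n :: ar) G
  | All2 n G => wf k (n :: ar) G
  end.

Definition formula (F : form) : Prop := wf 0 [] F = true.

(* n-ary abstracts lambda x0..x_{n-1}. G : G with first-order indices 0..n-1
   as the lambda-bound variables (Tm_1^(n)) *)
Definition abstract (n : nat) (G : form) : Prop := wf n [] G = true.

Definition topen (k : nat) (u t : term) : term :=
  match t with TB i => if Nat.eqb i k then u else t | TF _ => t end.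

Fixpoint open1 (k : nat) (u : term) (F : form) : form :=
  match F with
  | Atom P ts => Atom P (map (topen k u) ts)
  | Neg G => Neg (open1 k u G)
  | Or G H => Or (open1 k u G) (open1 k u H)
  | And G H => And (open1 k u G) (open1 k u H)
  | Ex1 G => Ex1 (open1 (S k) u G)
  | All1 G => All1 (open1 (S k) u G)
  | Ex2 n G => Ex2 n (open1 k u G)
  | All2 n G => All2 n (open1 k u G)
  end.

(* instantiating an abstract with argument terms (beta reduction) *)
Definition tlift (d : nat) (t : term) : term :=
  match t with TB j => TB (j + d) | TF a => TF a end.

Definition tsub (d : nat) (ts : list term) (t : term) : term :=
  match t with
  | TF a => TF a
  | TB i => if Nat.ltb i d then TB i else tlift d (nth (i - d) ts (TB 0))
  end.

Fixpoint fsub (d : nat) (ts : list term) (G : form) : form :=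
  match G with
  | Atom P us => Atom P (map (tsub d ts) us)
  | Neg H => Neg (fsub d ts H)
  | Or H K => Or (fsub d ts H) (fsub d ts K)
  | And H K => And (fsub d ts H) (fsub d ts K)
  | Ex1 H => Ex1 (fsub (S d) ts H)
  | All1 H => All1 (fsub (S d) ts H)
  | Ex2 n H => Ex2 n (fsub d ts H)
  | All2 n H => All2 n (fsub d ts H)
  end.

Fixpoint open2 (k : nat) (T : form) (F : form) : form :=
  match F with
  | Atom (PB i) ts => if Nat.eqb i k then fsub 0 ts T else Atom (PB i) ts
  | Atom P ts => Atom P ts
  | Neg G => Neg (open2 k T G)
  | Or G H => Or (open2 k T G) (open2 k T H)
  | And G H => And (open2 k T G) (open2 k T H)
  | Ex1 G => Ex1 (open2 k T G)
  | All1 G => All1 (open2 k T G)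
  | Ex2 n G => Ex2 n (open2 (S k) T G)
  | All2 n G => All2 n (open2 (S k) T G)
  end.

Fixpoint open2v (k : nat) (a n : nat) (F : form) : form :=
  match F with
  | Atom (PB i) ts => if Nat.eqb i k then Atom (PF a n) ts else Atom (PB i) ts
  | Atom P ts => Atom P ts
  | Neg G => Neg (open2v k a n G)
  | Or G H => Or (open2v k a n G) (open2v k a n H)
  | And G H => And (open2v k a n G) (open2v k a n H)
  | Ex1 G => Ex1 (open2v k a n G)
  | All1 G => All1 (open2v k a n G)
  | Ex2 m G => Ex2 m (open2v (S k) a n G)
  | All2 m G => All2 m (open2v (S k) a n G)
  end.

Fixpoint occ1 (a : nat) (F : form) : bool :=
  match F with
  | Atom _ ts => existsb (fun t => match t with TF b => Nat.eqb a b | TB _ => false end) ts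
  | Neg G => occ1 a G
  | Or G H | And G H => occ1 a G || occ1 a H
  | Ex1 G | All1 G | Ex2 _ G | All2 _ G => occ1 a G
  end.

Fixpoint occ2 (a n : nat) (F : form) : bool :=
  match F with
  | Atom (PF b m) _ => Nat.eqb a b && Nat.eqb n m
  | Atom (PB _) _ => false
  | Neg G => occ2 a n G
  | Or G H | And G H => occ2 a n G || occ2 a n H
  | Ex1 G | All1 G | Ex2 _ G | All2 _ G => occ2 a n G
  end.

Definition isAtom (F : form) : Prop := exists P ts, F = Atom P ts.

Definition fresh1 (a : nat) (Gam Del : list form) : Prop :=
  forall A, In A (Gam ++ Del) -> occ1 a A = false.
Definition fresh2 (a n : nat) (Gam Del : list form) : Prop :=
  forall A, In A (Gam ++ Del) -> occ2 a n A = false.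

(* Sequents Gam => Del: pairs of finite sets, represented by lists read as
   sets (all rules are stated via membership, so provability only depends on
   the underlying sets).  Rules keep the major formula in the premise. *)
Inductive prov : list form -> list form -> Prop :=
| p_init A Gam Del : isAtom A -> In A Gam -> In A Del -> prov Gam Del
| p_negL F Gam Del : In (Neg F) Gam -> prov Gam (F :: Del) -> prov Gam Del
| p_negR F Gam Del : In (Neg F) Del -> prov (F :: Gam) Del -> prov Gam Del
| p_orL F0 F1 Gam Del : In (Or F0 F1) Gam ->
    prov (F0 :: Gam) Del -> prov (F1 :: Gam) Del -> prov Gam Del
| p_orR0 F0 F1 Gam Del : In (Or F0 F1) Del -> prov Gam (F0 :: Del) -> prov Gam Del
| p_orR1 F0 F1 Gam Del : In (Or F0 F1) Del -> prov Gam (F1 :: Del) -> prov Gam Del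
| p_andL0 F0 F1 Gam Del : In (And F0 F1) Gam -> prov (F0 :: Gam) Del -> prov Gam Del
| p_andL1 F0 F1 Gam Del : In (And F0 F1) Gam -> prov (F1 :: Gam) Del -> prov Gam Del
| p_andR F0 F1 Gam Del : In (And F0 F1) Del ->
    prov Gam (F0 :: Del) -> prov Gam (F1 :: Del) -> prov Gam Del
| p_ex1L F a Gam Del : In (Ex1 F) Gam -> fresh1 a Gam Del ->
    prov (open1 0 (TF a) F :: Gam) Del -> prov Gam Del
| p_ex1R F a Gam Del : In (Ex1 F) Del ->
    prov Gam (open1 0 (TF a) F :: Del) -> prov Gam Del
| p_all1L F a Gam Del : In (All1 F) Gam ->
    prov (open1 0 (TF a) F :: Gam) Del -> prov Gam Del
| p_all1R F a Gam Del : In (All1 F) Del -> fresh1 a Gam Del ->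
    prov Gam (open1 0 (TF a) F :: Del) -> prov Gam Del
| p_ex2L n F a Gam Del : In (Ex2 n F) Gam -> fresh2 a n Gam Del ->
    prov (open2v 0 a n F :: Gam) Del -> prov Gam Del
| p_ex2R n F T Gam Del : In (Ex2 n F) Del -> abstract n T ->
    prov Gam (open2 0 T F :: Del) -> prov Gam Del
| p_all2L n F T Gam Del : In (All2 n F) Gam -> abstract n T ->
    prov (open2 0 T F :: Gam) Del -> prov Gam Del
| p_all2R n F a Gam Del : In (All2 n F) Del -> fresh2 a n Gam Del ->
    prov Gam (open2v 0 a n F :: Del) -> prov Gam Del.

Definition sequent : Type := (list form * list form)%type.
Definition inS (x : sequent) : Prop :=
  Forall formula (fst x) /\ Forall formula (snd x).

(* subsets of S are predicates on sequents (contained in inS) *)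
Definition sset : Type := sequent -> Prop.
Definition subset (a b : sset) : Prop := forall y, a y -> b y.

Definition M (x : sequent) : sset :=
  fun y => inS y /\ prov (fst x ++ fst y) (snd x ++ snd y).

(* B_S = { alpha subset S : alpha = /\ { M(x) : x in S, alpha subset M(x) } } *)
Definition inB (al : sset) : Prop :=
  subset al inS /\
  forall y, al y <-> (inS y /\ forall x, inS x -> subset al (M x) -> M x y).

Definition m (y : sequent) : sset :=
  fun z => inS z /\ forall x, inS x -> M x y -> M x z.

Definition Binf {I : Type} (f : I -> sset) : sset :=
  fun y => inS y /\ forall i, f i y.
Definition Bsup {I : Type} (f : I -> sset) : sset :=
  fun y => inS y /\
    forall g, inB g -> (forall i, subset (f i) g) -> g y.
Definition Bcompl (al : sset) : sset :=
  fun y => inS y /\ forall x, inS x -> al x -> M x y.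

(* D B_S: pairs (Box a, Diamond a) with Box a <= Diamond a *)
Definition inDB (a : sset * sset) : Prop :=
  inB (fst a) /\ inB (snd a) /\ subset (fst a) (snd a).
Definition leD (a b : sset * sset) : Prop :=
  subset (fst a) (fst b) /\ subset (snd b) (snd a).
Definition negD (a : sset * sset) : sset * sset :=
  (Bcompl (snd a), Bcompl (fst a)).
Definition supD {I : Type} (f : I -> sset * sset) : sset * sset :=
  (Bsup (fun i => fst (f i)), Bsup (fun i => snd (f i))).
Definition infD {I : Type} (f : I -> sset * sset) : sset * sset :=
  (Binf (fun i => fst (f i)), Binf (fun i => snd (f i))).

Definition pair2 {X : Type} (u v : X) : bool -> X := fun b => if b then u else v.

Definition semi_valuation (V : form -> sset * sset) : Prop :=
  (forall A, formula A -> inDB (V A)) /\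
  (forall F, formula (Neg F) -> leD (V (Neg F)) (negD (V F))) /\
  (forall F0 F1, formula (Or F0 F1) ->
     leD (V (Or F0 F1)) (supD (pair2 (V F0) (V F1)))) /\
  (forall F0 F1, formula (And F0 F1) ->
     leD (V (And F0 F1)) (infD (pair2 (V F0) (V F1)))) /\
  (forall F, formula (Ex1 F) ->
     leD (V (Ex1 F)) (supD (fun a : nat => V (open1 0 (TF a) F)))) /\
  (forall F, formula (All1 F) ->
     leD (V (All1 F)) (infD (fun a : nat => V (open1 0 (TF a) F)))) /\
  (forall n F, formula (Ex2 n F) ->
     leD (V (Ex2 n F))
         (supD (fun T : {G : form | abstract n G} => V (open2 0 (proj1_sig T) F)))) /\
  (forall n F, formula (All2 n F) ->
     leD (V (All2 n F))
         (infD (fun T : {G : form | abstract n G} => V (open2 0 (proj1_sig T) F)))).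

Definition Vcan (A : form) : sset * sset := (m ([A], []), M ([], [A])).

(* Each M(x) is closed in B_S (it is the meet of the M(x') containing it), and
   m(y) is the least closed set containing y.  An identity proof of A => A puts
   the sequent A => into M(=> A), so m(A =>) is contained in M(=> A).  Thanks to
   the symmetry x ∈ M(y) <-> y ∈ M(x), every clause of a semi valuation reduces to
   an inclusion between the sets M(F =>), M(=> F) of a formula and of its
   immediate subformulas, i.e. to one rule of the calculus: since every rule keeps
   its major formula, a proof of Γ, F_i => Δ gives one of Γ, C => Δ after
   weakening.  Weakening is admissible because provability is invariant under
   renaming free variables, which keeps eigenvariables fresh. *)

From Stdlib Require Import List Arith Bool Lia.
Import ListNotations.

(** * Renaming and weakening *)

Definition rename_term (s1 : nat -> nat) (t : term) : term :=
  match t with TF a => TF (s1 a) | TB i => TB i end.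

Fixpoint rename_form (s1 : nat -> nat) (s2 : nat -> nat -> nat) (F : form) : form :=
  match F with
  | Atom (PF a n) ts => Atom (PF (s2 a n) n) (map (rename_term s1) ts)
  | Atom (PB i) ts => Atom (PB i) (map (rename_term s1) ts)
  | Neg G => Neg (rename_form s1 s2 G)
  | Or G H => Or (rename_form s1 s2 G) (rename_form s1 s2 H)
  | And G H => And (rename_form s1 s2 G) (rename_form s1 s2 H)
  | Ex1 G => Ex1 (rename_form s1 s2 G)
  | All1 G => All1 (rename_form s1 s2 G)
  | Ex2 n G => Ex2 n (rename_form s1 s2 G)
  | All2 n G => All2 n (rename_form s1 s2 G)
  end.

Section Renaming.

Variables (s1 : nat -> nat) (s2 : nat -> nat -> nat).

Lemma rename_form_open1 F : forall k a,
  rename_form s1 s2 (open1 k (TF a) F) = open1 k (TF (s1 a)) (rename_form s1 s2 F).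
Proof.
  induction F; intros; simpl; rewrite ?IHF, ?IHF1, ?IHF2; try reflexivity.
  destruct P; simpl; rewrite !map_map; f_equal; apply map_ext;
    intros [b|j]; simpl; try reflexivity; destruct (Nat.eqb j k); reflexivity.
Qed.

Lemma rename_form_open2v F : forall k a n,
  rename_form s1 s2 (open2v k a n F) = open2v k (s2 a n) n (rename_form s1 s2 F).
Proof.
  induction F; intros; simpl; rewrite ?IHF, ?IHF1, ?IHF2; try reflexivity.
  destruct P; simpl; [reflexivity|]. destruct (Nat.eqb i k); reflexivity.
Qed.

Lemma rename_term_tsub d ts t :
  rename_term s1 (tsub d ts t) = tsub d (map (rename_term s1) ts) (rename_term s1 t).
Proof.
  destruct t as [a|i]; simpl; [reflexivity|]. destruct (Nat.ltb i d); [reflexivity|].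
  replace (nth (i - d) (map (rename_term s1) ts) (TB 0))
    with (rename_term s1 (nth (i - d) ts (TB 0))) by exact (eq_sym (map_nth (rename_term s1) ts (TB 0) (i - d))).
  destruct (nth (i - d) ts (TB 0)); reflexivity.
Qed.

Lemma rename_form_fsub T : forall d ts,
  rename_form s1 s2 (fsub d ts T) = fsub d (map (rename_term s1) ts) (rename_form s1 s2 T).
Proof.
  induction T; intros; simpl; rewrite ?IHT, ?IHT1, ?IHT2; try reflexivity.
  destruct P; simpl; rewrite !map_map; f_equal; apply map_ext; intros; apply rename_term_tsub.
Qed.

Lemma rename_form_open2 F : forall k T,
  rename_form s1 s2 (open2 k T F) = open2 k (rename_form s1 s2 T) (rename_form s1 s2 F).
Proof.
  induction F; intros; simpl; rewrite ?IHF, ?IHF1, ?IHF2; try reflexivity.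
  destruct P; simpl; [reflexivity|]. destruct (Nat.eqb i k); [apply rename_form_fsub|reflexivity].
Qed.

Lemma wf_rename_form F : forall k ar, wf k ar (rename_form s1 s2 F) = wf k ar F.
Proof.
  assert (Hts : forall k ts, forallb (twf k) (map (rename_term s1) ts) = forallb (twf k) ts)
    by (induction ts as [|[] ts IH]; simpl; rewrite ?IH; reflexivity).
  induction F; intros; simpl; rewrite ?IHF, ?IHF1, ?IHF2; try reflexivity.
  destruct P; simpl; rewrite length_map, Hts; reflexivity.
Qed.

Lemma abstract_rename_form n T : abstract n T -> abstract n (rename_form s1 s2 T).
Proof. unfold abstract; rewrite wf_rename_form; exact id. Qed.

End Renaming.

Lemma rename_form_id F : rename_form (fun x => x) (fun a _ => a) F = F.
Proof.
  assert (Hts : forall ts, map (rename_term (fun x => x)) ts = ts)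
    by (induction ts as [|[] ts IH]; simpl; rewrite ?IH; reflexivity).
  induction F; simpl; rewrite ?IHF, ?IHF1, ?IHF2; try reflexivity.
  destruct P; rewrite Hts; reflexivity.
Qed.

Definition update1 (s1 : nat -> nat) (a b : nat) : nat -> nat :=
  fun x => if Nat.eqb x a then b else s1 x.

Definition update2 (s2 : nat -> nat -> nat) (a n b : nat) : nat -> nat -> nat :=
  fun x k => if Nat.eqb x a && Nat.eqb k n then b else s2 x k.

Lemma rename_form_update1 s1 s2 a b F : occ1 a F = false ->
  rename_form (update1 s1 a b) s2 F = rename_form s1 s2 F.
Proof.
  assert (Hts : forall ts,
    existsb (fun t => match t with TF c => Nat.eqb a c | TB _ => false end) ts = false ->
    map (rename_term (update1 s1 a b)) ts = map (rename_term s1) ts).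
  { induction ts as [|t ts IH]; simpl; [reflexivity|]; intros H.
    apply orb_false_iff in H as [Ht H]. rewrite IH by exact H. f_equal.
    destruct t; simpl; [|reflexivity]. unfold update1. rewrite Nat.eqb_sym, Ht. reflexivity. }
  induction F; simpl; intros H; try apply orb_false_iff in H as [? ?];
    rewrite ?IHF, ?IHF1, ?IHF2 by assumption; try reflexivity.
  destruct P; rewrite Hts by exact H; reflexivity.
Qed.

Lemma rename_form_update2 s1 s2 a n b F : occ2 a n F = false ->
  rename_form s1 (update2 s2 a n b) F = rename_form s1 s2 F.
Proof.
  induction F; simpl; intros H; try apply orb_false_iff in H as [? ?];
    rewrite ?IHF, ?IHF1, ?IHF2 by assumption; try reflexivity.
  destruct P; [|reflexivity]. unfold update2.
  rewrite (Nat.eqb_sym a0 a), (Nat.eqb_sym n0 n), H. reflexivity.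
Qed.

Lemma map_rename_form_update1 s1 s2 a b Gam Del : fresh1 a Gam Del ->
  map (rename_form (update1 s1 a b) s2) Gam = map (rename_form s1 s2) Gam /\
  map (rename_form (update1 s1 a b) s2) Del = map (rename_form s1 s2) Del.
Proof.
  intros Ha; split; apply map_ext_in; intros A HA;
    apply rename_form_update1, Ha, in_or_app; auto.
Qed.

Lemma map_rename_form_update2 s1 s2 a n b Gam Del : fresh2 a n Gam Del ->
  map (rename_form s1 (update2 s2 a n b)) Gam = map (rename_form s1 s2) Gam /\
  map (rename_form s1 (update2 s2 a n b)) Del = map (rename_form s1 s2) Del.
Proof.
  intros Ha; split; apply map_ext_in; intros A HA;
    apply rename_form_update2, Ha, in_or_app; auto.
Qed.

Definition fvar1_name (t : term) : nat := match t with TF b => b | TB _ => 0 end.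

Fixpoint max_fvar1 (F : form) : nat :=
  match F with
  | Atom _ ts => list_max (map fvar1_name ts)
  | Neg G => max_fvar1 G
  | Or G H | And G H => max (max_fvar1 G) (max_fvar1 H)
  | Ex1 G | All1 G | Ex2 _ G | All2 _ G => max_fvar1 G
  end.

Fixpoint max_fvar2 (F : form) : nat :=
  match F with
  | Atom (PF b _) _ => b
  | Atom (PB _) _ => 0
  | Neg G => max_fvar2 G
  | Or G H | And G H => max (max_fvar2 G) (max_fvar2 H)
  | Ex1 G | All1 G | Ex2 _ G | All2 _ G => max_fvar2 G
  end.

Lemma le_list_max x l : In x l -> x <= list_max l.
Proof.
  intros H. apply (proj1 (Forall_forall _ _) (proj1 (list_max_le l _) (le_n _)) x H).
Qed.

Lemma occ1_le_max_fvar1 a F : occ1 a F = true -> a <= max_fvar1 F.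
Proof.
  induction F; simpl; intros H;
    try (apply orb_true_iff in H as [H|H]; [apply IHF1 in H|apply IHF2 in H]; lia); auto.
  apply existsb_exists in H as [[b|j] [Hin Hb]]; [|discriminate].
  apply Nat.eqb_eq in Hb; subst. apply le_list_max, (in_map fvar1_name _ _ Hin).
Qed.

Lemma occ2_le_max_fvar2 a n F : occ2 a n F = true -> a <= max_fvar2 F.
Proof.
  induction F; simpl; intros H;
    try (apply orb_true_iff in H as [H|H]; [apply IHF1 in H|apply IHF2 in H]; lia); auto.
  destruct P; [|discriminate]. apply andb_true_iff in H as [H _]. apply Nat.eqb_eq in H; lia.
Qed.

Lemma fresh1_exists Gam Del : exists a, fresh1 a Gam Del.
Proof.
  exists (S (list_max (map max_fvar1 (Gam ++ Del)))). intros A HA.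
  destruct (occ1 _ A) eqn:E; [|reflexivity]. apply occ1_le_max_fvar1 in E.
  pose proof (le_list_max _ _ (in_map max_fvar1 _ _ HA)). lia.
Qed.

Lemma fresh2_exists n Gam Del : exists a, fresh2 a n Gam Del.
Proof.
  exists (S (list_max (map max_fvar2 (Gam ++ Del)))). intros A HA.
  destruct (occ2 _ _ A) eqn:E; [|reflexivity]. apply occ2_le_max_fvar2 in E.
  pose proof (le_list_max _ _ (in_map max_fvar2 _ _ HA)). lia.
Qed.

Lemma rename_form_update1_open1 s1 s2 a b F : occ1 a F = false ->
  rename_form (update1 s1 a b) s2 (open1 0 (TF a) F) = open1 0 (TF b) (rename_form s1 s2 F).
Proof.
  intros H. rewrite rename_form_open1, rename_form_update1 by exact H.
  unfold update1. rewrite Nat.eqb_refl. reflexivity.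
Qed.

Lemma rename_form_update2_open2v s1 s2 a n b F : occ2 a n F = false ->
  rename_form s1 (update2 s2 a n b) (open2v 0 a n F) = open2v 0 b n (rename_form s1 s2 F).
Proof.
  intros H. rewrite rename_form_open2v, rename_form_update2 by exact H.
  unfold update2. rewrite !Nat.eqb_refl. reflexivity.
Qed.

Lemma incl_cons_same {A : Type} (x : A) l l' : incl l l' -> incl (x :: l) (x :: l').
Proof. intros H. apply incl_cons; [left; reflexivity|apply incl_tl, H]. Qed.

Local Ltac major :=
  match goal with
  | HG' : forall A, In A ?G -> _, H : In _ ?G |- _ => exact (HG' _ H)
  | Hb : fresh1 _ _ _ |- _ => exact Hb
  | Hb : fresh2 _ _ _ _ |- _ => exact Hb
  end.

Local Ltac rename_premise IH s1 s2 :=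
  apply (IH s1 s2); simpl; rewrite ?rename_form_open1, ?rename_form_open2;
  try apply incl_cons_same; assumption.

(* Eigenvariables of the premise are renamed to variables fresh for the new conclusion. *)
Lemma prov_rename Gam Del : prov Gam Del -> forall s1 s2 Gam' Del',
  incl (map (rename_form s1 s2) Gam) Gam' -> incl (map (rename_form s1 s2) Del) Del' ->
  prov Gam' Del'.
Proof.
  induction 1; intros s1 s2 Gam' Del' HG HD;
    assert (HG' := fun A h => HG _ (in_map (rename_form s1 s2) _ A h));
    assert (HD' := fun A h => HD _ (in_map (rename_form s1 s2) _ A h));
    set (r := rename_form s1 s2).
  - apply p_init with (r A); try major.
    destruct H as [[a n|i] [ts ->]]; do 2 eexists; reflexivity.
  - apply p_negL with (r F); [major|rename_premise IHprov s1 s2].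
  - apply p_negR with (r F); [major|rename_premise IHprov s1 s2].
  - apply p_orL with (r F0) (r F1);
      [major|rename_premise IHprov1 s1 s2|rename_premise IHprov2 s1 s2].
  - apply p_orR0 with (r F0) (r F1); [major|rename_premise IHprov s1 s2].
  - apply p_orR1 with (r F0) (r F1); [major|rename_premise IHprov s1 s2].
  - apply p_andL0 with (r F0) (r F1); [major|rename_premise IHprov s1 s2].
  - apply p_andL1 with (r F0) (r F1); [major|rename_premise IHprov s1 s2].
  - apply p_andR with (r F0) (r F1);
      [major|rename_premise IHprov1 s1 s2|rename_premise IHprov2 s1 s2].
  - destruct (fresh1_exists Gam' Del') as [b Hb].
    destruct (map_rename_form_update1 s1 s2 a b _ _ H0) as [EG ED].
    apply p_ex1L with (r F) b; [major|major|].
    apply (IHprov (update1 s1 a b) s2); [|rewrite ED; exact HD].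
    simpl; rewrite EG, rename_form_update1_open1 by exact (H0 _ (in_or_app _ _ _ (or_introl H))).
    apply incl_cons_same, HG.
  - apply p_ex1R with (r F) (s1 a); [major|rename_premise IHprov s1 s2].
  - apply p_all1L with (r F) (s1 a); [major|rename_premise IHprov s1 s2].
  - destruct (fresh1_exists Gam' Del') as [b Hb].
    destruct (map_rename_form_update1 s1 s2 a b _ _ H0) as [EG ED].
    apply p_all1R with (r F) b; [major|major|].
    apply (IHprov (update1 s1 a b) s2); [rewrite EG; exact HG|].
    simpl; rewrite ED, rename_form_update1_open1 by exact (H0 _ (in_or_app _ _ _ (or_intror H))).
    apply incl_cons_same, HD.
  - destruct (fresh2_exists n Gam' Del') as [b Hb].
    destruct (map_rename_form_update2 s1 s2 a n b _ _ H0) as [EG ED].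
    apply p_ex2L with n (r F) b; [major|major|].
    apply (IHprov s1 (update2 s2 a n b)); [|rewrite ED; exact HD].
    simpl; rewrite EG, rename_form_update2_open2v by exact (H0 _ (in_or_app _ _ _ (or_introl H))).
    apply incl_cons_same, HG.
  - apply p_ex2R with n (r F) (r T);
      [major|apply abstract_rename_form, H0|rename_premise IHprov s1 s2].
  - apply p_all2L with n (r F) (r T);
      [major|apply abstract_rename_form, H0|rename_premise IHprov s1 s2].
  - destruct (fresh2_exists n Gam' Del') as [b Hb].
    destruct (map_rename_form_update2 s1 s2 a n b _ _ H0) as [EG ED].
    apply p_all2R with n (r F) b; [major|major|].
    apply (IHprov s1 (update2 s2 a n b)); [rewrite EG; exact HG|].
    simpl; rewrite ED, rename_form_update2_open2v by exact (H0 _ (in_or_app _ _ _ (or_intror H))).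
    apply incl_cons_same, HD.
Qed.

Lemma prov_weaken Gam Del Gam' Del' :
  prov Gam Del -> incl Gam Gam' -> incl Del Del' -> prov Gam' Del'.
Proof.
  intros H HG HD. apply (prov_rename _ _ H (fun x => x) (fun a _ => a));
    rewrite (map_ext _ (fun x => x) rename_form_id), map_id; assumption.
Qed.

Ltac split_andb :=
  repeat match goal with H : _ && _ = true |- _ => apply andb_prop in H as [? ?] end.

Lemma wf_open1 F : forall k ar a,
  wf (S k) ar F = true -> wf k ar (open1 k (TF a) F) = true.
Proof.
  assert (Hts : forall k a ts, forallb (twf (S k)) ts = true ->
                 forallb (twf k) (map (topen k (TF a)) ts) = true).
  { induction ts as [|t ts IH]; simpl; [reflexivity|]; intros Ht.
    apply andb_prop in Ht as [Ht Hts]. rewrite IH by exact Hts.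
    destruct t as [|i]; simpl; [reflexivity|]. destruct (Nat.eqb_spec i k); simpl; [reflexivity|].
    simpl in Ht; apply Nat.ltb_lt in Ht. apply andb_true_intro; split; [apply Nat.ltb_lt; lia|reflexivity]. }
  induction F; intros k ar a H; simpl in *; split_andb; rewrite ?IHF, ?IHF1, ?IHF2 by assumption;
    try reflexivity.
  destruct P; split_andb; rewrite length_map, Hts by assumption; rewrite ?andb_true_iff; auto.
Qed.

Lemma wf_app_r F : forall k ar ar', wf k ar F = true -> wf k (ar ++ ar') F = true.
Proof.
  induction F; intros k ar ar' H; simpl in *; split_andb;
    rewrite ?IHF, ?IHF1, ?IHF2 by assumption; try reflexivity;
    try (apply (IHF k (n :: ar)); assumption).
  destruct P; [assumption|]. split_andb. apply Nat.ltb_lt in H.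
  rewrite app_nth1, length_app by exact H. rewrite H1, H0, !andb_true_r. apply Nat.ltb_lt; lia.
Qed.

Lemma wf_fsub k n ts T : forall d ar, wf (d + n) ar T = true -> length ts = n ->
  forallb (twf k) ts = true -> wf (d + k) ar (fsub d ts T) = true.
Proof.
  induction T; intros d ar H Hl Hts; simpl in *; split_andb;
    try (rewrite ?IHT1, ?IHT2; auto; fail);
    try (apply (IHT (S d)); auto; fail);
    try (apply IHT; auto; fail).
  assert (Hus : forall us, forallb (twf (d + n)) us = true ->
                 forallb (twf (d + k)) (map (tsub d ts) us) = true).
  { induction us as [|t us IH]; simpl; [reflexivity|]; intros Ht.
    apply andb_prop in Ht as [Ht Hus]. rewrite IH, andb_true_r by exact Hus.
    destruct t as [|i]; simpl in *; [reflexivity|]. apply Nat.ltb_lt in Ht.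
    destruct (Nat.ltb_spec i d); simpl; [apply Nat.ltb_lt; lia|].
    assert (Hin : In (nth (i - d) ts (TB 0)) ts) by (apply nth_In; lia).
    rewrite forallb_forall in Hts. specialize (Hts _ Hin).
    destruct (nth (i - d) ts (TB 0)); simpl in *; [reflexivity|].
    apply Nat.ltb_lt in Hts; apply Nat.ltb_lt; lia. }
  destruct P; split_andb; rewrite length_map, Hus by assumption; rewrite ?andb_true_iff; auto.
Qed.

Lemma wf_open2 n T F : abstract n T -> forall k ar d, wf k ar F = true -> length ar = S d ->
  nth d ar 0 = n -> wf k (firstn d ar) (open2 d T F) = true.
Proof.
  intros HT. induction F; intros k ar d H Hl Hn; simpl in *; split_andb;
    try (rewrite ?IHF1, ?IHF2; auto; fail);
    try (apply IHF; auto; fail);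
    try (apply (IHF k (n0 :: ar) (S d)); simpl; auto; fail).
  destruct P; [exact H|]. split_andb. destruct (Nat.eqb_spec i d) as [->|Hid].
  - apply (wf_app_r _ _ []), (wf_fsub k n ts T 0 []); [exact HT| |assumption].
    apply Nat.eqb_eq in H1; rewrite H1; exact Hn.
  - apply Nat.ltb_lt in H. simpl. rewrite length_firstn, nth_firstn.
    assert (E : (i <? d) = true) by (apply Nat.ltb_lt; lia).
    rewrite E, H1, H0, !andb_true_r. apply Nat.ltb_lt; lia.
Qed.

Lemma formula_open1 F a : wf 1 [] F = true -> formula (open1 0 (TF a) F).
Proof. apply wf_open1. Qed.

Lemma formula_open2 n F T : wf 0 [n] F = true -> abstract n T -> formula (open2 0 T F).
Proof. intros HF HT. exact (wf_open2 n T F HT 0 [n] 0 HF eq_refl eq_refl). Qed.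

(* The abstract [lambda x_0 .. x_(n-1). a(x_0, .., x_(n-1))], by which [open2v] is a case of [open2]. *)
Definition var_abstract (a n : nat) : form := Atom (PF a n) (map TB (seq 0 n)).

Lemma abstract_var_abstract a n : abstract n (var_abstract a n).
Proof.
  unfold abstract, var_abstract; simpl. rewrite length_map, length_seq, Nat.eqb_refl.
  apply forallb_forall; intros t Ht. apply in_map_iff in Ht as [i [<- Hi]].
  apply in_seq in Hi. apply Nat.ltb_lt; lia.
Qed.

Lemma map_nth_seq0 {A : Type} (l : list A) d : map (fun i => nth i l d) (seq 0 (length l)) = l.
Proof.
  induction l as [|x l IH]; simpl; [reflexivity|]. f_equal.
  rewrite <- seq_shift, map_map. exact IH.
Qed.

Lemma open2_var_abstract a n F : forall k ar d, wf k ar F = true -> nth d ar 0 = n ->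
  open2 d (var_abstract a n) F = open2v d a n F.
Proof.
  induction F; intros k ar d H Hn; simpl in *; split_andb;
    try (rewrite (IHF1 k ar d), (IHF2 k ar d); auto; fail);
    try (rewrite (IHF (S k) ar d); auto; fail);
    try (rewrite (IHF k ar d); auto; fail);
    try (rewrite (IHF k (n0 :: ar) (S d)); auto; fail).
  destruct P; [reflexivity|]. split_andb. destruct (Nat.eqb_spec i d) as [->|]; [|reflexivity].
  unfold var_abstract; simpl. f_equal. apply Nat.eqb_eq in H1.
  rewrite map_map, <- Hn, <- H1. rewrite <- (map_nth_seq0 ts (TB 0)) at 2.
  apply map_ext; intros i; simpl. rewrite Nat.sub_0_r.
  destruct (nth i ts (TB 0)); simpl; rewrite ?Nat.add_0_r; reflexivity.
Qed.

Lemma formula_open2v n F a : wf 0 [n] F = true -> formula (open2v 0 a n F).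
Proof.
  intros HF. rewrite <- (open2_var_abstract a n F 0 [n] 0 HF eq_refl).
  exact (formula_open2 n F _ HF (abstract_var_abstract a n)).
Qed.

Fixpoint form_size (F : form) : nat :=
  match F with
  | Atom _ _ => 0
  | Neg G => S (form_size G)
  | Or G H | And G H => S (form_size G + form_size H)
  | Ex1 G | All1 G | Ex2 _ G | All2 _ G => S (form_size G)
  end.

Lemma form_size_open1 F : forall k u, form_size (open1 k u F) = form_size F.
Proof. induction F; intros; simpl; rewrite ?IHF, ?IHF1, ?IHF2; reflexivity. Qed.

Lemma form_size_open2v F : forall k a n, form_size (open2v k a n F) = form_size F.
Proof.
  induction F; intros; simpl; rewrite ?IHF, ?IHF1, ?IHF2; try reflexivity.
  destruct P; simpl; [|destruct (Nat.eqb i k)]; reflexivity.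
Qed.

Lemma prov_identity A : formula A -> forall Gam Del, In A Gam -> In A Del -> prov Gam Del.
Proof.
  remember (form_size A) as s eqn:Hs. revert A Hs.
  induction s as [s IH] using lt_wf_ind; intros A Hs HA Gam Del HG HD.
  assert (IHs : forall B, form_size B < s -> formula B ->
                forall Gam Del, In B Gam -> In B Del -> prov Gam Del)
    by (intros B HB; exact (IH _ HB B eq_refl)).
  destruct A as [P ts|F|F0 F1|F0 F1|F|F|n F|n F]; simpl in Hs; unfold formula in HA; simpl in HA;
    split_andb.
  - apply p_init with (Atom P ts); [do 2 eexists; reflexivity|assumption|assumption].
  - apply p_negL with F; [exact HG|]. apply p_negR with F; [right; exact HD|].
    apply (IHs F); [lia|exact HA|left|left]; reflexivity.
  - apply p_orL with F0 F1; [exact HG| |].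
    + apply p_orR0 with F0 F1; [exact HD|].
      apply (IHs F0); [lia|assumption|left|left]; reflexivity.
    + apply p_orR1 with F0 F1; [exact HD|].
      apply (IHs F1); [lia|assumption|left|left]; reflexivity.
  - apply p_andR with F0 F1; [exact HD| |].
    + apply p_andL0 with F0 F1; [exact HG|].
      apply (IHs F0); [lia|assumption|left|left]; reflexivity.
    + apply p_andL1 with F0 F1; [exact HG|].
      apply (IHs F1); [lia|assumption|left|left]; reflexivity.
  - destruct (fresh1_exists Gam Del) as [a Ha].
    apply p_ex1L with F a; [exact HG|exact Ha|]. apply p_ex1R with F a; [exact HD|].
    apply (IHs (open1 0 (TF a) F));
      [rewrite form_size_open1; lia|apply formula_open1, HA|left|left]; reflexivity.
  - destruct (fresh1_exists Gam Del) as [a Ha].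
    apply p_all1R with F a; [exact HD|exact Ha|]. apply p_all1L with F a; [exact HG|].
    apply (IHs (open1 0 (TF a) F));
      [rewrite form_size_open1; lia|apply formula_open1, HA|left|left]; reflexivity.
  - destruct (fresh2_exists n Gam Del) as [a Ha].
    apply p_ex2L with n F a; [exact HG|exact Ha|].
    apply p_ex2R with n F (var_abstract a n); [exact HD|apply abstract_var_abstract|].
    rewrite (open2_var_abstract a n F 0 [n] 0 HA eq_refl).
    apply (IHs (open2v 0 a n F));
      [rewrite form_size_open2v; lia|apply formula_open2v, HA|left|left]; reflexivity.
  - destruct (fresh2_exists n Gam Del) as [a Ha].
    apply p_all2R with n F a; [exact HD|exact Ha|].
    apply p_all2L with n F (var_abstract a n); [exact HG|apply abstract_var_abstract|].
    rewrite (open2_var_abstract a n F 0 [n] 0 HA eq_refl).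
    apply (IHs (open2v 0 a n F));
      [rewrite form_size_open2v; lia|apply formula_open2v, HA|left|left]; reflexivity.
Qed.

Lemma inS_left A : formula A -> inS ([A], []).
Proof. split; simpl; constructor; auto. Qed.

Lemma inS_right A : formula A -> inS ([], [A]).
Proof. split; simpl; constructor; auto. Qed.

Lemma M_sym x y : inS x -> M x y -> M y x.
Proof.
  intros Hx [_ P]. split; [exact Hx|].
  apply (prov_weaken _ _ _ _ P); intros A HA; rewrite in_app_iff in *; tauto.
Qed.

Lemma M_inB x : inS x -> inB (M x).
Proof.
  intros Hx. split; [intros y [Hy _]; exact Hy|]. intros y; split.
  - intros Hy. split; [apply Hy|]. intros x' _ Hsub. apply Hsub, Hy.
  - intros [_ H]. apply H; [exact Hx|]. intros z Hz; exact Hz.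
Qed.

Lemma m_refl y : inS y -> m y y.
Proof. split; auto. Qed.

Lemma m_inB y : inS y -> inB (m y).
Proof.
  intros Hy. split; [intros z [Hz _]; exact Hz|]. intros z; split.
  - intros [Hz H]. split; [exact Hz|]. intros x Hx Hsub. apply H, Hsub, m_refl; assumption.
  - intros [Hz H]. split; [exact Hz|]. intros x Hx Hxy. apply H; [exact Hx|].
    intros w [_ Hw]. apply Hw; assumption.
Qed.

Lemma m_subset_M x y : inS x -> M x y -> subset (m y) (M x).
Proof. intros Hx Hxy z [_ H]. apply H; assumption. Qed.

Lemma m_antitone y y' : inS y' -> subset (M y) (M y') -> subset (m y') (m y).
Proof.
  intros Hy' Hsub z [Hz H]. split; [exact Hz|]. intros x Hx Hxy.
  apply H, M_sym, Hsub, M_sym; assumption.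
Qed.

Lemma m_subset_Bsup {I : Type} (h : I -> sset) (f : I -> sequent) y :
  inS y -> (forall i, h i (f i)) ->
  (forall x, inS x -> (forall i, M (f i) x) -> M y x) ->
  subset (m y) (Bsup h).
Proof.
  intros Hy Hf Hx z [Hz H]. split; [exact Hz|]. intros g [_ Hg] Hhg.
  apply Hg. split; [exact Hz|]. intros x Hx' Hgx.
  apply H; [exact Hx'|]. apply M_sym; [exact Hy|]. apply Hx; [exact Hx'|].
  intros i. apply M_sym; [exact Hx'|]. apply Hgx, (Hhg i), Hf.
Qed.

Lemma Bsup_least {I : Type} (h : I -> sset) g :
  inB g -> (forall i, subset (h i) g) -> subset (Bsup h) g.
Proof. intros Hg Hhg y [_ H]. exact (H g Hg Hhg). Qed.

Lemma m_subset_Bcompl w y : inS y -> subset (M w) (M y) -> subset (m y) (Bcompl (M w)).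
Proof.
  intros Hy Hsub z [Hz H]. split; [exact Hz|]. intros x Hx Hwx.
  apply H, M_sym, Hsub; assumption.
Qed.

Lemma Bcompl_m_subset y : inS y -> subset (Bcompl (m y)) (M y).
Proof. intros Hy z [_ H]. apply H, m_refl; assumption. Qed.

(** * The rules as inclusions between sets M(x) *)

Ltac weaken_from P :=
  apply (prov_weaken _ _ _ _ P); intros ? ?; simpl in *; tauto.

Section SingletonRules.

Variable y : sequent.

Lemma M_neg_left F : M ([], [F]) y -> M ([Neg F], []) y.
Proof.
  intros [Hy P]; split; [exact Hy|]; simpl in *.
  apply p_negL with F; [left; reflexivity|weaken_from P].
Qed.

Lemma M_neg_right F : M ([F], []) y -> M ([], [Neg F]) y.
Proof.
  intros [Hy P]; split; [exact Hy|]; simpl in *.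
  apply p_negR with F; [left; reflexivity|weaken_from P].
Qed.

Lemma M_or_left F0 F1 : M ([F0], []) y -> M ([F1], []) y -> M ([Or F0 F1], []) y.
Proof.
  intros [Hy P0] [_ P1]; split; [exact Hy|]; simpl in *.
  apply p_orL with F0 F1; [left; reflexivity|weaken_from P0|weaken_from P1].
Qed.

Lemma M_or_right0 F0 F1 : M ([], [F0]) y -> M ([], [Or F0 F1]) y.
Proof.
  intros [Hy P]; split; [exact Hy|]; simpl in *.
  apply p_orR0 with F0 F1; [left; reflexivity|weaken_from P].
Qed.

Lemma M_or_right1 F0 F1 : M ([], [F1]) y -> M ([], [Or F0 F1]) y.
Proof.
  intros [Hy P]; split; [exact Hy|]; simpl in *.
  apply p_orR1 with F0 F1; [left; reflexivity|weaken_from P].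
Qed.

Lemma M_and_left0 F0 F1 : M ([F0], []) y -> M ([And F0 F1], []) y.
Proof.
  intros [Hy P]; split; [exact Hy|]; simpl in *.
  apply p_andL0 with F0 F1; [left; reflexivity|weaken_from P].
Qed.

Lemma M_and_left1 F0 F1 : M ([F1], []) y -> M ([And F0 F1], []) y.
Proof.
  intros [Hy P]; split; [exact Hy|]; simpl in *.
  apply p_andL1 with F0 F1; [left; reflexivity|weaken_from P].
Qed.

Lemma M_and_right F0 F1 : M ([], [F0]) y -> M ([], [F1]) y -> M ([], [And F0 F1]) y.
Proof.
  intros [Hy P0] [_ P1]; split; [exact Hy|]; simpl in *.
  apply p_andR with F0 F1; [left; reflexivity|weaken_from P0|weaken_from P1].
Qed.

Lemma M_ex1_left F : (forall a, M ([open1 0 (TF a) F], []) y) -> M ([Ex1 F], []) y.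
Proof.
  intros H. destruct (fresh1_exists (Ex1 F :: fst y) (snd y)) as [a Ha].
  destruct (H a) as [Hy P]; split; [exact Hy|]; simpl in *.
  apply p_ex1L with F a; [left; reflexivity|exact Ha|weaken_from P].
Qed.

Lemma M_ex1_right F a : M ([], [open1 0 (TF a) F]) y -> M ([], [Ex1 F]) y.
Proof.
  intros [Hy P]; split; [exact Hy|]; simpl in *.
  apply p_ex1R with F a; [left; reflexivity|weaken_from P].
Qed.

Lemma M_all1_left F a : M ([open1 0 (TF a) F], []) y -> M ([All1 F], []) y.
Proof.
  intros [Hy P]; split; [exact Hy|]; simpl in *.
  apply p_all1L with F a; [left; reflexivity|weaken_from P].
Qed.

Lemma M_all1_right F : (forall a, M ([], [open1 0 (TF a) F]) y) -> M ([], [All1 F]) y.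
Proof.
  intros H. destruct (fresh1_exists (fst y) (All1 F :: snd y)) as [a Ha].
  destruct (H a) as [Hy P]; split; [exact Hy|]; simpl in *.
  apply p_all1R with F a; [left; reflexivity|exact Ha|weaken_from P].
Qed.

Lemma M_ex2_left n F : wf 0 [n] F = true ->
  (forall T, abstract n T -> M ([open2 0 T F], []) y) -> M ([Ex2 n F], []) y.
Proof.
  intros HF H. destruct (fresh2_exists n (Ex2 n F :: fst y) (snd y)) as [a Ha].
  destruct (H _ (abstract_var_abstract a n)) as [Hy P]; split; [exact Hy|]; simpl in *.
  rewrite (open2_var_abstract a n F 0 [n] 0 HF eq_refl) in P.
  apply p_ex2L with n F a; [left; reflexivity|exact Ha|weaken_from P].
Qed.

Lemma M_ex2_right n F T : abstract n T ->
  M ([], [open2 0 T F]) y -> M ([], [Ex2 n F]) y.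
Proof.
  intros HT [Hy P]; split; [exact Hy|]; simpl in *.
  apply p_ex2R with n F T; [left; reflexivity|exact HT|weaken_from P].
Qed.

Lemma M_all2_left n F T : abstract n T ->
  M ([open2 0 T F], []) y -> M ([All2 n F], []) y.
Proof.
  intros HT [Hy P]; split; [exact Hy|]; simpl in *.
  apply p_all2L with n F T; [left; reflexivity|exact HT|weaken_from P].
Qed.

Lemma M_all2_right n F : wf 0 [n] F = true ->
  (forall T, abstract n T -> M ([], [open2 0 T F]) y) -> M ([], [All2 n F]) y.
Proof.
  intros HF H. destruct (fresh2_exists n (fst y) (All2 n F :: snd y)) as [a Ha].
  destruct (H _ (abstract_var_abstract a n)) as [Hy P]; split; [exact Hy|]; simpl in *.
  rewrite (open2_var_abstract a n F 0 [n] 0 HF eq_refl) in P.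
  apply p_all2R with n F a; [left; reflexivity|exact Ha|weaken_from P].
Qed.

End SingletonRules.

Lemma Vcan_inDB A : formula A -> inDB (Vcan A).
Proof.
  intros HA. split; [apply m_inB, inS_left, HA|]. split; [apply M_inB, inS_right, HA|].
  apply m_subset_M; [apply inS_right, HA|]. split; [apply inS_left, HA|].
  apply (prov_identity A HA); left; reflexivity.
Qed.

Lemma Vcan_neg F : formula (Neg F) -> leD (Vcan (Neg F)) (negD (Vcan F)).
Proof.
  intros HF. split.
  - apply m_subset_Bcompl; [exact (inS_left _ HF)|]. intros y; apply M_neg_left.
  - intros y Hy. apply M_neg_right, (Bcompl_m_subset _ (inS_left F HF)), Hy.
Qed.

Lemma Vcan_or F0 F1 : formula (Or F0 F1) ->
  leD (Vcan (Or F0 F1)) (supD (pair2 (Vcan F0) (Vcan F1))).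
Proof.
  intros HF. destruct (andb_prop _ _ HF) as [H0 H1]. split.
  - apply (m_subset_Bsup _ (fun b => ([pair2 F0 F1 b], []))); [exact (inS_left _ HF)| |].
    + intros [|]; apply m_refl, inS_left; assumption.
    + intros y _ Hy. apply M_or_left; [exact (Hy true)|exact (Hy false)].
  - apply Bsup_least; [exact (M_inB _ (inS_right _ HF))|].
    intros [|] y; [apply M_or_right0|apply M_or_right1].
Qed.

Lemma Vcan_and F0 F1 : formula (And F0 F1) ->
  leD (Vcan (And F0 F1)) (infD (pair2 (Vcan F0) (Vcan F1))).
Proof.
  intros HF. split.
  - intros z Hz. split; [apply Hz|].
    intros [|]; apply (m_antitone _ _ (inS_left _ HF)); [intros y; apply M_and_left0
      |exact Hz|intros y; apply M_and_left1|exact Hz].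
  - intros y [_ Hy]. apply M_and_right; [exact (Hy true)|exact (Hy false)].
Qed.

Lemma Vcan_ex1 F : formula (Ex1 F) ->
  leD (Vcan (Ex1 F)) (supD (fun a : nat => Vcan (open1 0 (TF a) F))).
Proof.
  intros HF. split.
  - apply (m_subset_Bsup _ (fun a => ([open1 0 (TF a) F], []))); [exact (inS_left _ HF)| |].
    + intros a; apply m_refl, inS_left, formula_open1, HF.
    + intros y _ Hy. apply M_ex1_left, Hy.
  - apply Bsup_least; [exact (M_inB _ (inS_right _ HF))|]. intros a y; apply M_ex1_right.
Qed.

Lemma Vcan_all1 F : formula (All1 F) ->
  leD (Vcan (All1 F)) (infD (fun a : nat => Vcan (open1 0 (TF a) F))).
Proof.
  intros HF. split.
  - intros z Hz. split; [apply Hz|]. intros a.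
    apply (m_antitone _ _ (inS_left _ HF)); [intros y; apply M_all1_left|exact Hz].
  - intros y [_ Hy]. apply M_all1_right, Hy.
Qed.

Lemma Vcan_ex2 n F : formula (Ex2 n F) ->
  leD (Vcan (Ex2 n F))
      (supD (fun T : {G : form | abstract n G} => Vcan (open2 0 (proj1_sig T) F))).
Proof.
  intros HF. split.
  - apply (m_subset_Bsup _ (fun T => ([open2 0 (proj1_sig T) F], [])));
      [exact (inS_left _ HF)| |].
    + intros [T HT]; apply m_refl, inS_left, (formula_open2 n); assumption.
    + intros y _ Hy. apply M_ex2_left; [exact HF|]. intros T HT; exact (Hy (exist _ T HT)).
  - apply Bsup_least; [exact (M_inB _ (inS_right _ HF))|].
    intros [T HT] y; apply M_ex2_right, HT.
Qed.

Lemma Vcan_all2 n F : formula (All2 n F) ->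
  leD (Vcan (All2 n F))
      (infD (fun T : {G : form | abstract n G} => Vcan (open2 0 (proj1_sig T) F))).
Proof.
  intros HF. split.
  - intros z Hz. split; [apply Hz|]. intros [T HT].
    apply (m_antitone _ _ (inS_left _ HF)); [intros y; apply M_all2_left, HT|exact Hz].
  - intros y [_ Hy]. apply M_all2_right; [exact HF|]. intros T HT; exact (Hy (exist _ T HT)).
Qed.

Theorem mainTheorem12 :
  (forall A : form, formula A ->
     inB (m ([A], [])) /\ inB (M ([], [A])) /\ subset (m ([A], [])) (M ([], [A])))
  /\ semi_valuation Vcan.
Proof.
  split; [exact Vcan_inDB|].
  exact (conj Vcan_inDB (conj Vcan_neg (conj Vcan_or (conj Vcan_and
          (conj Vcan_ex1 (conj Vcan_all1 (conj Vcan_ex2 Vcan_all2))))))).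
Qed.
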